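(* Let $G$ be a unital semigroup with unit $e$, let $H$ and $K$ be Hilbert spaces, and let $\mathcal T=(T(g))_{g\in G}\subseteq\mathcal L(H)$ and $\mathcal S=(S(g))_{g\in G}\subseteq\mathcal L(K)$ be representations of $G$ on $H$ and $K$ respectively. Assume there exist $A\in\mathcal L(K,H)$ and $B\in\mathcal L(H,K)$ such that $T(g)=AS(g)B$ for all $g\in G$. Then there exist $\mathcal S$-invariant closed subspaces $K_1\subseteq K_2$ of $K$ and an isomorphism $\mathscr A\in\mathcal L(K_2\ominus K_1,H)$ with $\|\mathscr A\|\|\mathscr A^{-1}\|\le\|A\|\|B\|$ and $$T(g)=\mathscr A\,P_{K_2\ominus K_1}S(g)|_{K_2\ominus K_1}\,\mathscr A^{-1},\qquad g\in G.$$ Thus $\mathcal T$ is similar to the compression of $\mathcal S$ to $K_2\ominus K_1$.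
   Context: A representation of a unital semigroup $G$ on a Hilbert space $H$ is a map $g\mapsto T(g)\in\mathcal L(H)$ with $T(gh)=T(g)T(h)$ and $T(e)=I$. $K_2\ominus K_1$ denotes the orthogonal complement of $K_1$ in $K_2$, $P_{K_2\ominus K_1}\in\mathcal L(K)$ the orthogonal projection of $K$ onto $K_2\ominus K_1$, and $S(g)|_{K_2\ominus K_1}$ the restriction of $S(g)$ to $K_2\ominus K_1$. *)

From HB Require Import structures.
From mathcomp Require Import all_boot all_order all_algebra.
From mathcomp Require Import classical_sets reals.
From mathcomp.real_closed Require Import complex.

Set Implicit Arguments.
Unset Strict Implicit.
Unset Printing Implicit Defensive.
Import Order.TTheory GRing.Theory Num.Theory.
Local Open Scope ring_scope.

Definition is_inner_product (R : realType) (V : lmodType R[i])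
    (ip : V -> V -> R[i]) : Prop :=
  [/\ forall (a : R[i]) (x y z : V), ip (a *: x + y) z = a * ip x z + ip y z,
      forall x y : V, ip y x = conjc (ip x y),
      forall x : V, 0 <= ip x x
    & forall x : V, ip x x = 0 -> x = 0].

Definition hnorm (R : realType) (V : lmodType R[i]) (ip : V -> V -> R[i])
    (x : V) : R := Num.sqrt (complex.Re (ip x x)).

Definition hcauchy (R : realType) (V : lmodType R[i]) (ip : V -> V -> R[i])
    (u : nat -> V) : Prop :=
  forall eps : R, 0 < eps -> exists N : nat, forall m n : nat,
    (N <= m)%N -> (N <= n)%N -> hnorm ip (u m - u n) < eps.

Definition hcvg_to (R : realType) (V : lmodType R[i]) (ip : V -> V -> R[i])
    (u : nat -> V) (l : V) : Prop :=
  forall eps : R, 0 < eps -> exists N : nat, forall n : nat,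
    (N <= n)%N -> hnorm ip (u n - l) < eps.

Definition is_hilbert (R : realType) (V : lmodType R[i])
    (ip : V -> V -> R[i]) : Prop :=
  is_inner_product ip /\
  forall u : nat -> V, hcauchy ip u -> exists l : V, hcvg_to ip u l.

Definition bounded_on (R : realType) (V W : lmodType R[i])
    (ipV : V -> V -> R[i]) (ipW : W -> W -> R[i]) (M : V -> Prop)
    (f : V -> W) : Prop :=
  exists c : R, forall x : V, M x -> hnorm ipW (f x) <= c * hnorm ipV x.

Definition bounded (R : realType) (V W : lmodType R[i])
    (ipV : V -> V -> R[i]) (ipW : W -> W -> R[i]) (f : V -> W) : Prop :=
  bounded_on ipV ipW (fun _ => True) f.

Definition opnorm_on (R : realType) (V W : lmodType R[i])
    (ipV : V -> V -> R[i]) (ipW : W -> W -> R[i]) (M : V -> Prop)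
    (f : V -> W) : R :=
  inf (fun c : R => 0 <= c /\
         forall x : V, M x -> hnorm ipW (f x) <= c * hnorm ipV x).

Definition opnorm (R : realType) (V W : lmodType R[i])
    (ipV : V -> V -> R[i]) (ipW : W -> W -> R[i]) (f : V -> W) : R :=
  opnorm_on ipV ipW (fun _ => True) f.

Definition is_representation (R : realType) (V : lmodType R[i])
    (ip : V -> V -> R[i]) (G : Type) (op : G -> G -> G) (e : G)
    (T : G -> {linear V -> V}) : Prop :=
  [/\ forall g : G, bounded ip ip (T g),
      forall (g h : G) (x : V), T (op g h) x = T g (T h x)
    & forall x : V, T e x = x].

Definition is_subspace (R : realType) (V : lmodType R[i]) (M : V -> Prop)
  : Prop :=
  [/\ M 0, forall x y : V, M x -> M y -> M (x + y)
    & forall (a : R[i]) (x : V), M x -> M (a *: x)].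

Definition is_closed_subspace (R : realType) (V : lmodType R[i])
    (ip : V -> V -> R[i]) (M : V -> Prop) : Prop :=
  is_subspace M /\
  forall (u : nat -> V) (l : V), (forall n, M (u n)) -> hcvg_to ip u l -> M l.

Definition is_invariant (R : realType) (V : lmodType R[i]) (G : Type)
    (T : G -> {linear V -> V}) (M : V -> Prop) : Prop :=
  forall (g : G) (x : V), M x -> M (T g x).

Definition ominus (R : realType) (V : lmodType R[i]) (ip : V -> V -> R[i])
    (K2 K1 : V -> Prop) : V -> Prop :=
  fun x => K2 x /\ forall y : V, K1 y -> ip x y = 0.

Definition is_orth_proj (R : realType) (V : lmodType R[i])
    (ip : V -> V -> R[i]) (M : V -> Prop) (P : V -> V) : Prop :=
  (forall x : V, M (P x)) /\
  (forall x y : V, M y -> ip (x - P x) y = 0).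

From HB Require Import structures.
From mathcomp Require Import all_boot all_order all_algebra.
From mathcomp Require Import boolp classical_sets reals.
From mathcomp.real_closed Require Import complex.
From mathcomp Require Import ring lra zify.

Set Implicit Arguments.
Unset Strict Implicit.
Unset Printing Implicit Defensive.
Import Order.TTheory GRing.Theory Num.Theory.
Local Open Scope ring_scope.

(* K1 = {x | A S(g) x = 0 for all g} and K2 = {x | A S(g) x = T(g) A x for all g}
   are closed S-invariant subspaces with K1 inside K2, and B maps H into K2 with
   A B = I (take g = e).  On K2 the operator A factors through K2 / K1, so A P = A
   on K2, where P is the orthogonal projection onto K2 ⊖ K1.  Hence A restricted
   to K2 ⊖ K1 and P B are mutually inverse, ||P B|| <= ||B||, and since S(g)
   preserves K2, T(g) = A S(g) B = A P S(g) P B.  The projections come from best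
   approximations, which exist by the parallelogram law and completeness. *)

Lemma conjcM (R : rcfType) (u v : R[i]) : (u * v)^*%C = u^*%C * v^*%C.
Proof. exact: rmorphM. Qed.

Lemma complex_ReD (R : rcfType) (u v : R[i]) :
  complex.Re (u + v) = complex.Re u + complex.Re v.
Proof. by case: u; case: v. Qed.

Lemma complex_ReN (R : rcfType) (u : R[i]) : complex.Re (- u) = - complex.Re u.
Proof. by case: u. Qed.

Lemma complex_ReJ (R : rcfType) (u : R[i]) : complex.Re u^*%C = complex.Re u.
Proof. by case: u. Qed.

Lemma eventually_inv_succ_lt (R : realType) (eps : R) : 0 < eps ->
  exists N : nat, forall n : nat, (N <= n)%N -> n.+1%:R^-1 < eps.
Proof.
move=> eps0; exists (Num.Def.archi_bound eps^-1) => n Nn.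
have eps_inv0 : 0 <= eps^-1 by rewrite invr_ge0 ltW.
have N_le : (Num.Def.archi_bound eps^-1)%:R <= n.+1%:R :> R by rewrite ler_nat; lia.
rewrite -[eps]invrK ltf_pV2 ?posrE ?ltr0Sn ?invr_gt0 //.
exact: lt_le_trans (archi_boundP eps_inv0) N_le.
Qed.

Definition sqnorm (R : realType) (V : lmodType R[i]) (ip : V -> V -> R[i])
    (x : V) : R := complex.Re (ip x x).

Section InnerProduct.
Variables (R : realType) (V : lmodType R[i]) (ip : V -> V -> R[i]).
Hypothesis hip : is_inner_product ip.
Local Notation sqnorm := (sqnorm ip).
Local Notation hnorm := (hnorm ip).

Lemma ipDl x y z : ip (x + y) z = ip x z + ip y z.
Proof. by case: hip => lin _ _ _; have := lin 1 x y z; rewrite scale1r mul1r. Qed.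

Lemma ip0l z : ip 0 z = 0.
Proof. by apply: (addrI (ip 0 z)); rewrite -ipDl !addr0. Qed.

Lemma ipZl a x z : ip (a *: x) z = a * ip x z.
Proof. by case: hip => lin _ _ _; have := lin a x 0 z; rewrite !addr0 ip0l addr0. Qed.

Lemma ipNl x z : ip (- x) z = - ip x z.
Proof. by rewrite -scaleN1r ipZl mulN1r. Qed.

Lemma ipBl x y z : ip (x - y) z = ip x z - ip y z.
Proof. by rewrite ipDl ipNl. Qed.

Lemma ipC x y : ip y x = (ip x y)^*%C.
Proof. by case: hip. Qed.

Lemma ipDr x y z : ip x (y + z) = ip x y + ip x z.
Proof. by rewrite ipC ipDl rmorphD /= -!ipC. Qed.

Lemma ipZr a x z : ip x (a *: z) = a^*%C * ip x z.
Proof. by rewrite ipC ipZl rmorphM /= -ipC. Qed.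

Lemma ipNr x z : ip x (- z) = - ip x z.
Proof. by rewrite ipC ipNl rmorphN /= -ipC. Qed.

Lemma ipBr x y z : ip x (y - z) = ip x y - ip x z.
Proof. by rewrite ipDr ipNr. Qed.

Lemma ip_sqnorm x : ip x x = (sqnorm x)%:C%C.
Proof.
case: hip => _ _ ge0 _; have := ge0 x; rewrite /sqnorm.
by case: (ip x x) => a b; rewrite lecE /= => /andP[/eqP -> _].
Qed.

Lemma sqnorm_ge0 x : 0 <= sqnorm x.
Proof. by case: hip => _ _ ge0 _; move: (ge0 x); rewrite lecE => /andP[]. Qed.

Lemma sqnorm_eq0 x : sqnorm x = 0 -> x = 0.
Proof. by case: hip => _ _ _ def x0; apply: def; rewrite ip_sqnorm x0. Qed.

Lemma sqnorm0 : sqnorm 0 = 0.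
Proof. by rewrite /sqnorm ip0l. Qed.

Lemma sqnormD x y : sqnorm (x + y) = sqnorm x + sqnorm y + 2 * complex.Re (ip x y).
Proof. by rewrite /sqnorm ipDl !ipDr !complex_ReD [ip y x]ipC complex_ReJ; ring. Qed.

Lemma sqnormN x : sqnorm (- x) = sqnorm x.
Proof. by rewrite /sqnorm ipNl ipNr opprK. Qed.

Lemma sqnormB x y : sqnorm (x - y) = sqnorm x + sqnorm y - 2 * complex.Re (ip x y).
Proof. by rewrite sqnormD sqnormN ipNr complex_ReN mulrN. Qed.

Lemma sqnorm_parallelogram x y :
  sqnorm (x + y) + sqnorm (x - y) = 2 * sqnorm x + 2 * sqnorm y.
Proof. by rewrite sqnormD sqnormB; ring. Qed.

Lemma sqnormD_le x y : sqnorm (x + y) <= 2 * sqnorm x + 2 * sqnorm y.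
Proof. by rewrite -sqnorm_parallelogram lerDl sqnorm_ge0. Qed.

Lemma hnorm0 : hnorm 0 = 0.
Proof. by rewrite /hnorm -/(sqnorm 0) sqnorm0 sqrtr0. Qed.

Lemma hnorm_le x y : sqnorm x <= sqnorm y -> hnorm x <= hnorm y.
Proof. by move=> le_xy; rewrite /hnorm ler_sqrt // sqnorm_ge0. Qed.

Lemma hnorm_lt x eps : 0 < eps -> (hnorm x < eps) = (sqnorm x < eps ^+ 2).
Proof.
move=> eps0; rewrite /hnorm -{1}(ger0_norm (ltW eps0)) -sqrtr_sqr ltr_sqrt //.
exact: exprn_gt0.
Qed.

Lemma hcvgP u l : hcvg_to ip u l <->
  forall eps, 0 < eps -> exists N, forall n, (N <= n)%N -> sqnorm (u n - l) < eps.
Proof.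
split=> cvg_ul eps eps0.
  have [N uN] := cvg_ul (Num.sqrt eps) (etrans (sqrtr_gt0 _) eps0).
  by exists N => n /uN; rewrite hnorm_lt ?sqrtr_gt0 // sqr_sqrtr // ltW.
have [N uN] := cvg_ul (eps ^+ 2) (exprn_gt0 _ eps0).
by exists N => n /uN; rewrite hnorm_lt.
Qed.

Lemma hcauchyP u : hcauchy ip u <->
  forall eps, 0 < eps -> exists N, forall m n, (N <= m)%N -> (N <= n)%N ->
    sqnorm (u m - u n) < eps.
Proof.
split=> cauchy_u eps eps0.
  have [N uN] := cauchy_u (Num.sqrt eps) (etrans (sqrtr_gt0 _) eps0).
  exists N => m n Nm /(uN _ _ Nm).
  by rewrite hnorm_lt ?sqrtr_gt0 // sqr_sqrtr // ltW.
have [N uN] := cauchy_u (eps ^+ 2) (exprn_gt0 _ eps0).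
by exists N => m n Nm /(uN _ _ Nm); rewrite hnorm_lt.
Qed.

Lemma hcvg_unique u l l' : hcvg_to ip u l -> hcvg_to ip u l' -> l = l'.
Proof.
move=> /hcvgP cvg_l /hcvgP cvg_l'; apply/eqP; rewrite -subr_eq0; apply/eqP/sqnorm_eq0.
apply/le_anti; rewrite sqnorm_ge0 andbT; apply/ler_addgt0Pr => eps eps0.
have eps4 : 0 < eps / 4 by rewrite divr_gt0.
have [N uN] := cvg_l _ eps4; have [N' uN'] := cvg_l' _ eps4.
have := uN (maxn N N') (leq_maxl _ _); have := uN' (maxn N N') (leq_maxr _ _).
set v := u _ => near_l' near_l.
have -> : l - l' = (v - l') - (v - l) by rewrite opprB [RHS]addrC addrA subrK.
have := sqnormD_le (v - l') (- (v - l)); rewrite sqnormN; lra.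
Qed.

Lemma subspaceB (M : V -> Prop) x y : is_subspace M -> M x -> M y -> M (x - y).
Proof. by case=> _ MD MZ Mx My; apply: MD => //; rewrite -scaleN1r; exact: MZ. Qed.

Lemma orth_proj_unique (M : V -> Prop) x a b : is_subspace M -> M a -> M b ->
    (forall m, M m -> ip (x - a) m = 0) -> (forall m, M m -> ip (x - b) m = 0) ->
  a = b.
Proof.
move=> subM Ma Mb orth_a orth_b; apply/eqP; rewrite -subr_eq0; apply/eqP.
case: hip => _ _ _; apply.
have E : a - b = (x - b) - (x - a) by rewrite opprB [RHS]addrC addrA subrK.
have Mab := subspaceB subM Ma Mb.
by rewrite {1}E ipBl orth_b ?orth_a // subrr.
Qed.

Lemma best_approx_orth (M : V -> Prop) z : is_subspace M ->
  (forall w, M w -> sqnorm z <= sqnorm (z - w)) -> forall m, M m -> ip z m = 0.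
Proof.
case=> _ _ MZ z_min m Mm; set c := ip z m.
have m_ge0 := sqnorm_ge0 m.
pose r := (sqnorm m + 1)^-1.
have r_gt0 : 0 < r by rewrite invr_gt0; lra.
have r_small : r * sqnorm m < 1 by rewrite mulrC ltr_pdivrMr ?mul1r; lra.
(* moving z by a small multiple of c m lowers its norm unless c = 0 *)
have decrease : (sqnorm (z - (r%:C%C * c) *: m))%:C%C
    = (sqnorm z)%:C%C - (r * (2 - r * sqnorm m))%:C%C * (c * c^*%C).
  rewrite -!ip_sqnorm ipBl !ipBr ipZl !ipZr ipZl [ip m z]ipC -/c conjcM conjc_real.
  have realM (a b : R) : (a * b)%:C%C = a%:C%C * b%:C%C by exact: rmorphM.
  have realB (a b : R) : (a - b)%:C%C = a%:C%C - b%:C%C by exact: rmorphB.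
  have real2 : (2 : R)%:C%C = 2 by rewrite -[2]/(2%:R) rmorph_nat.
  rewrite !ip_sqnorm realM realB real2 realM.
  by move: r%:C%C c c^*%C (sqnorm z)%:C%C (sqnorm m)%:C%C => *; ring.
have := z_min _ (MZ (r%:C%C * c) _ Mm); rewrite -lecR decrease -subr_ge0.
rewrite addrAC subrr add0r oppr_ge0 pmulr_rle0; last first.
  by rewrite ltcR mulr_gt0 //; lra.
move=> cc_le0; have /eqP : c * c^*%C = 0 by apply/le_anti; rewrite cc_le0 mulcJ_ge0.
by rewrite mulf_eq0 conjc_eq0 orbb => /eqP.
Qed.

Section BestApproximation.
Hypothesis complete : forall u, hcauchy ip u -> exists l, hcvg_to ip u l.
Variables (M : V -> Prop) (x : V).
Hypothesis closedM : is_closed_subspace ip M.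

Let d := inf ((fun m => sqnorm (x - m)) @` M).

Lemma dist_le m : M m -> d <= sqnorm (x - m).
Proof.
move=> Mm; apply: ge_inf; last by exists m.
by exists 0 => _ [w _ <-]; exact: sqnorm_ge0.
Qed.

Lemma exists_minimizing_seq : exists f : nat -> V,
  (forall n, M (f n)) /\ forall n, sqnorm (x - f n) < d + n.+1%:R^-1.
Proof.
have near n : exists m, M m /\ sqnorm (x - m) < d + n.+1%:R^-1.
  have n_gt0 : 0 < n.+1%:R^-1 :> R by rewrite invr_gt0 ltr0Sn.
  have [|_ [m Mm <-] m_near] := inf_adherent (E := (fun m => sqnorm (x - m)) @` M) n_gt0.
    split; first by exists (sqnorm (x - 0)), 0 => //; case: closedM => -[].
    by exists 0 => _ [w _ <-]; exact: sqnorm_ge0.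
  by exists m.
by have [f f_near] := choice near; exists f; split => n; case: (f_near n).
Qed.

Lemma dist_parallelogram a b : M a -> M b ->
  sqnorm (a - b) <= 2 * sqnorm (x - a) + 2 * sqnorm (x - b) - 4 * d.
Proof.
case: closedM => -[_ MD MZ] _ Ma Mb.
set y := x - 2^-1 *: (a + b).
have := dist_le (MZ 2^-1 _ (MD _ _ Ma Mb)); rewrite -/y.
have half : 2^-1 + 2^-1 = 1 :> R[i].
  have two_neq0 : 2 != 0 :> R[i] by rewrite pnatr_eq0.
  by field.
have sum : (x - a) + (x - b) = y + y.
  by rewrite /y addrACA [RHS]addrACA -!opprD -scalerDl half scale1r.
have diff : (x - a) - (x - b) = - (a - b) by rewrite opprB addrC addrA subrK opprB.
have := sqnorm_parallelogram (x - a) (x - b).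
rewrite sum diff sqnormN sqnormD -[complex.Re (ip y y)]/(sqnorm y); lra.
Qed.

Section MinimizingSequence.
Variable f : nat -> V.
Hypotheses (Mf : forall n, M (f n))
  (f_near : forall n, sqnorm (x - f n) < d + n.+1%:R^-1).

Lemma minimizing_cauchy : hcauchy ip f.
Proof.
apply/hcauchyP => eps eps0.
have eps4 : 0 < eps / 4 by rewrite divr_gt0.
have [N N_small] := eventually_inv_succ_lt eps4.
exists N => m n Nm Nn; have := dist_parallelogram (Mf m) (Mf n).
have := f_near m; have := f_near n; have := N_small _ Nm; have := N_small _ Nn.
(* lra does not accept the nat casts in [n.+1%:R^-1] as atoms *)
by move: (m.+1%:R^-1 : R) (n.+1%:R^-1 : R) => *; lra.
Qed.

Lemma minimizing_limit_le y : hcvg_to ip f y -> sqnorm (x - y) <= d.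
Proof.
move=> cvg_y; have My := closedM.2 _ _ Mf cvg_y; have [_ MD _] := closedM.1.
apply/ler_addgt0Pr => eps eps0; have eps4 : 0 < eps / 4 by rewrite divr_gt0.
have [N1 N1_small] := eventually_inv_succ_lt eps4.
have [N2 N2_near] := (hcvgP _ _).1 cvg_y _ eps4.
set n := maxn N1 N2; have := N1_small n (leq_maxl _ _); have := N2_near n (leq_maxr _ _).
(* the reflection 2 f n - y of y through f n lies in M, hence is at least d away from x *)
have := dist_le (subspaceB closedM.1 (MD _ _ (Mf n) (Mf n)) My).
have := sqnorm_parallelogram (x - f n) (f n - y); rewrite addrA subrK.
have -> : x - f n - (f n - y) = x - (f n + f n - y).
  by rewrite opprB [in RHS]opprB opprD !addrA [x - f n + y]addrAC.
have := f_near n.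
by move: (n.+1%:R^-1 : R) => *; lra.
Qed.

End MinimizingSequence.

Lemma exists_best_approx :
  exists2 y, M y & forall m, M m -> sqnorm (x - y) <= sqnorm (x - m).
Proof.
have [f [Mf f_near]] := exists_minimizing_seq.
have [y cvg_y] := complete (minimizing_cauchy Mf f_near).
exists y; first exact: closedM.2 _ _ Mf cvg_y.
by move=> m Mm; apply: le_trans (minimizing_limit_le Mf f_near cvg_y) (dist_le Mm).
Qed.

End BestApproximation.

Section OrthogonalProjection.
Variables (M : V -> Prop) (P : V -> V).
Hypotheses (subM : is_subspace M) (projP : is_orth_proj ip M P).

Lemma orth_proj_linear : linear P.
Proof.
have [_ MD MZ] := subM; have [PM P_orth] := projP.
move=> a x y; apply: (orth_proj_unique subM (PM _) _ (P_orth _)).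
  by apply: MD; [apply: MZ|]; apply: PM.
move=> m Mm; have -> : a *: x + y - (a *: P x + P y) = a *: (x - P x) + (y - P y).
  by rewrite scalerBr opprD addrACA.
by rewrite ipDl ipZl !P_orth // mulr0 addr0.
Qed.

Lemma orth_proj_id x : M x -> P x = x.
Proof.
move=> Mx; apply: (orth_proj_unique subM (projP.1 x) Mx (projP.2 x)) => m _.
by rewrite subrr ip0l.
Qed.

Lemma orth_proj_eq0 x : (forall m, M m -> ip x m = 0) -> P x = 0.
Proof.
have [M0 _ _] := subM.
move=> x_orth; apply: (orth_proj_unique subM (projP.1 x) M0 (projP.2 x)) => m Mm.
by rewrite subr0 x_orth.
Qed.

Lemma sqnorm_orth_proj_le x : sqnorm (P x) <= sqnorm x.
Proof.
have [PM P_orth] := projP.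
have := sqnormD (x - P x) (P x); rewrite subrK P_orth //= mulr0 addr0 => ->.
by rewrite lerDr sqnorm_ge0.
Qed.

Lemma hnorm_orth_proj_le x : hnorm (P x) <= hnorm x.
Proof. exact/hnorm_le/sqnorm_orth_proj_le. Qed.

Lemma orth_proj_bounded : bounded ip ip P.
Proof. by exists 1 => x _; rewrite mul1r hnorm_orth_proj_le. Qed.

End OrthogonalProjection.

Lemma exists_orth_proj (M : V -> Prop) :
    (forall u, hcauchy ip u -> exists l, hcvg_to ip u l) ->
    is_closed_subspace ip M ->
  exists P : {linear V -> V}, is_orth_proj ip M P.
Proof.
move=> complete closedM.
have proj x : exists y, M y /\ forall m, M m -> ip (x - y) m = 0.
  have [y My y_best] := exists_best_approx complete x closedM.
  exists y; split => //; apply: best_approx_orth closedM.1 _ => w Mw.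
  have [_ MD _] := closedM.1.
  by rewrite -addrA -opprD y_best //; apply: MD.
have [P PM] := choice proj.
have projP : is_orth_proj ip M P by split => x; case: (PM x).
pose linP := GRing.isLinear.Build R[i] V V *:%R P (orth_proj_linear closedM.1 projP).
by exists (HB.pack P linP : {linear V -> V}).
Qed.

Lemma ominus_subspace (N K2 : V -> Prop) :
  is_subspace K2 -> is_subspace (ominus ip K2 N).
Proof.
case=> K0 KD KZ; split.
- by split=> // y _; rewrite ip0l.
- move=> x y [K2x x_orth] [K2y y_orth]; split=> [|z Nz]; first exact: KD.
  by rewrite ipDl x_orth ?y_orth ?addr0.
- move=> a x [K2x x_orth]; split=> [|z Nz]; first exact: KZ.
  by rewrite ipZl x_orth ?mulr0.
Qed.

Lemma orth_proj_ominus (N K2 : V -> Prop) (P1 P2 : V -> V) :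
    is_subspace K2 -> (forall x, N x -> K2 x) ->
    is_orth_proj ip N P1 -> is_orth_proj ip K2 P2 ->
  is_orth_proj ip (ominus ip K2 N) (P2 \- P1).
Proof.
move=> subK2 NK2 [P1N P1_orth] [P2K2 P2_orth]; split=> x /=.
  split=> [|y Ny]; first exact: subspaceB subK2 (P2K2 x) (NK2 _ (P1N x)).
  have -> : P2 x - P1 x = (x - P1 x) - (x - P2 x) by rewrite opprB [RHS]addrC addrA subrK.
  by rewrite ipBl P1_orth // P2_orth ?subrr //; apply: NK2.
move=> y [K2y y_orth].
have -> : x - (P2 x - P1 x) = (x - P2 x) + P1 x by rewrite opprB addrA addrAC.
by rewrite ipDl P2_orth // add0r ipC y_orth ?conjc0.
Qed.

Lemma orth_proj_ominus_sub (N K2 : V -> Prop) (P1 P2 : V -> V) :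
    is_subspace K2 -> is_orth_proj ip N P1 -> is_orth_proj ip K2 P2 ->
  forall x, K2 x -> N (x - (P2 \- P1) x).
Proof.
move=> subK2 projP1 projP2 x K2x.
by rewrite /= (orth_proj_id subK2 projP2 K2x) opprB addrC subrK; apply: projP1.1.
Qed.

End InnerProduct.

Lemma bounded_onP (R : realType) (V W : lmodType R[i]) (ipV : V -> V -> R[i])
    (ipW : W -> W -> R[i]) (M : V -> Prop) (f : V -> W) : bounded_on ipV ipW M f ->
  exists2 c, 0 <= c & forall x, M x -> hnorm ipW (f x) <= c * hnorm ipV x.
Proof.
case=> c f_le; exists `|c| => // x Mx; apply: le_trans (f_le x Mx) _.
by rewrite ler_wpM2r ?real_ler_norm ?num_real // sqrtr_ge0.
Qed.

Section BoundedOperators.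
Variables (R : realType) (U V W : lmodType R[i]).
Variables (ipU : U -> U -> R[i]) (ipV : V -> V -> R[i]) (ipW : W -> W -> R[i]).

Lemma bounded_on_sub (M M' : V -> Prop) (f : V -> W) :
  (forall x, M x -> M' x) -> bounded_on ipV ipW M' f -> bounded_on ipV ipW M f.
Proof. by move=> MM' [c f_le]; exists c => x /MM'; apply: f_le. Qed.

Lemma bounded_comp (f : V -> W) (g : U -> V) :
  bounded ipU ipV g -> bounded ipV ipW f -> bounded ipU ipW (f \o g).
Proof.
move=> /bounded_onP[c c0 g_le] /bounded_onP[c' c'0 f_le]; exists (c' * c) => x _.
by apply: le_trans (f_le _ I) _; rewrite -mulrA ler_wpM2l // g_le.
Qed.

Lemma bounded_linear_cvg (f : {linear V -> W}) u l :
  bounded ipV ipW f -> hcvg_to ipV u l -> hcvg_to ipW (f \o u) (f l).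
Proof.
move=> /bounded_onP[c c0 f_le] cvg_u eps eps0.
have c1_gt0 : 0 < c + 1 by rewrite ltr_wpDl.
have [N u_near] := cvg_u _ (divr_gt0 eps0 c1_gt0).
exists N => n /u_near u_lt; rewrite /= -linearB; apply: le_lt_trans (f_le _ I) _.
have c_eps : c * (eps / (c + 1)) < eps.
  by rewrite mulrA ltr_pdivrMr // mulrC ltr_pM2l // ltrDl ltr01.
apply: le_lt_trans c_eps; exact/ler_wpM2l/ltW.
Qed.

Lemma opnorm_on_ge0 (M : V -> Prop) (f : V -> W) : 0 <= opnorm_on ipV ipW M f.
Proof.
rewrite /opnorm_on; set E := fun c => _.
have [[c Ec]|noE] := pselect (exists c, E c).
  by apply: lb_le_inf; [exists c | move=> b []].
suff -> : E = set0 by rewrite inf0.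
by apply/seteqP; split=> // c Ec; apply: noE; exists c.
Qed.

Lemma le_opnorm_on (M M' : V -> Prop) (f g : V -> W) :
    (forall x, M x -> M' x) ->
    (forall x, M x -> hnorm ipW (f x) <= hnorm ipW (g x)) ->
    bounded_on ipV ipW M' g ->
  opnorm_on ipV ipW M f <= opnorm_on ipV ipW M' g.
Proof.
move=> MM' fg /bounded_onP[c c0 g_le].
apply: lb_le_inf; first by exists c; split=> // x /MM'; apply: g_le.
move=> b [b0 b_ok]; apply: ge_inf; first by exists 0 => a [].
by split=> // x Mx; apply: le_trans (fg _ Mx) (b_ok _ (MM' _ Mx)).
Qed.

Hypothesis ipW_inner : is_inner_product ipW.

Lemma equalizer_closed_subspace (I : Type) (f g : I -> {linear V -> W}) :
    (forall i, bounded ipV ipW (f i)) -> (forall i, bounded ipV ipW (g i)) ->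
  is_closed_subspace ipV (fun x => forall i, f i x = g i x).
Proof.
move=> f_bd g_bd; split.
  split=> [i|x y fgx fgy i|a x fgx i]; first by rewrite !linear0.
    by rewrite !linearD fgx fgy.
  by rewrite !linearZ fgx.
move=> u l fgu cvg_u i; apply: (hcvg_unique ipW_inner (bounded_linear_cvg (f_bd i) cvg_u)).
have -> : f i \o u = g i \o u by apply: funext => n /=; rewrite fgu.
exact: bounded_linear_cvg.
Qed.

Lemma bounded0 : bounded ipV ipW (\0 : {linear V -> W}).
Proof. by exists 0 => x _; rewrite mul0r /= hnorm0. Qed.

End BoundedOperators.

Definition orbit_kernel (R : realType) (G : Type) (H K : lmodType R[i])
    (S : G -> {linear K -> K}) (A : {linear K -> H}) : K -> Prop :=
  fun x => forall g, A (S g x) = 0.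

Definition intertwining_space (R : realType) (G : Type) (H K : lmodType R[i])
    (T : G -> {linear H -> H}) (S : G -> {linear K -> K}) (A : {linear K -> H})
  : K -> Prop :=
  fun x => forall g, A (S g x) = T g (A x).

Section Compression.
Variables (R : realType) (G : Type) (op : G -> G -> G) (e : G).
Variables (H K : lmodType R[i]) (ipH : H -> H -> R[i]) (ipK : K -> K -> R[i]).
Variables (T : G -> {linear H -> H}) (S : G -> {linear K -> K}).
Variables (A : {linear K -> H}) (B : {linear H -> K}).
Hypotheses (Tmul : forall g h x, T (op g h) x = T g (T h x)) (Te : forall x, T e x = x).
Hypotheses (Smul : forall g h x, S (op g h) x = S g (S h x)) (Se : forall x, S e x = x).
Hypothesis TASB : forall g x, T g x = A (S g (B x)).

Local Notation K1 := (orbit_kernel S A).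
Local Notation K2 := (intertwining_space T S A).

Lemma B_cancel : cancel B A.
Proof. by move=> h; rewrite -[RHS]Te TASB Se. Qed.

Lemma orbit_kernel_A0 x : K1 x -> A x = 0.
Proof. by move=> K1x; rewrite -[x]Se K1x. Qed.

Lemma orbit_kernel_sub x : K1 x -> K2 x.
Proof. by move=> K1x g; rewrite K1x orbit_kernel_A0 // linear0. Qed.

Lemma intertwining_B h : K2 (B h).
Proof. by move=> g; rewrite -TASB B_cancel. Qed.

Lemma orbit_kernel_invariant : is_invariant S K1.
Proof. by move=> g x K1x h; rewrite -Smul K1x. Qed.

Lemma intertwining_invariant : is_invariant S K2.
Proof. by move=> g x K2x h; rewrite -Smul K2x Tmul K2x. Qed.

Lemma orbit_kernel_BA x : K2 x -> K1 (B (A x) - x).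
Proof. by move=> K2x g; rewrite !linearB /= intertwining_B K2x B_cancel subrr. Qed.

Hypotheses (ipH_inner : is_inner_product ipH) (bdA : bounded ipK ipH A).
Hypotheses (bdT : forall g, bounded ipH ipH (T g)) (bdS : forall g, bounded ipK ipK (S g)).

Lemma orbit_kernel_closed : is_closed_subspace ipK K1.
Proof.
apply: (equalizer_closed_subspace ipH_inner (f := fun g => A \o S g) (g := fun=> \0)).
  by move=> g; exact: bounded_comp (bdS g) bdA.
by move=> _; exact: bounded0.
Qed.

Lemma intertwining_closed : is_closed_subspace ipK K2.
Proof.
apply: (equalizer_closed_subspace ipH_inner (f := fun g => A \o S g) (g := fun g => T g \o A)).
  by move=> g; exact: bounded_comp (bdS g) bdA.
by move=> g; exact: bounded_comp bdA (bdT g).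
Qed.

Variable P : {linear K -> K}.
Hypotheses (ipK_inner : is_inner_product ipK) (subK2 : is_subspace K2)
  (projP : is_orth_proj ipK (ominus ipK K2 K1) P)
  (P_sub : forall x, K2 x -> K1 (x - P x)).

Lemma A_orth_proj x : K2 x -> A (P x) = A x.
Proof. by move=> /P_sub/orbit_kernel_A0; rewrite linearB => /subr0_eq/esym. Qed.

Lemma orth_proj_B_cancel : cancel (P \o B) A.
Proof. by move=> h; rewrite /= A_orth_proj ?B_cancel //; apply: intertwining_B. Qed.

Lemma orth_proj_BA_id x : ominus ipK K2 K1 x -> P (B (A x)) = x.
Proof.
move=> Mx; have subM := ominus_subspace ipK_inner K1 subK2.
rewrite -[B (A x)](subrK x) linearD (orth_proj_id ipK_inner subM projP Mx).
rewrite (orth_proj_eq0 ipK_inner subM projP) ?add0r // => m [_ m_orth].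
by rewrite ipC // m_orth ?conjc0 //; apply: orbit_kernel_BA; case: Mx.
Qed.

Lemma compression_similar g h : T g h = A (P (S g (P (B h)))).
Proof.
have K2y : K2 (P (B h)) by case: (projP.1 (B h)).
rewrite A_orth_proj ?K2y ?orth_proj_B_cancel //; exact: intertwining_invariant.
Qed.

End Compression.

Theorem proposition4p1 (R : realType)
  (G : Type) (op : G -> G -> G) (e : G)
  (op_assoc : forall a b c : G, op a (op b c) = op (op a b) c)
  (op_e_l : forall a : G, op e a = a) (op_e_r : forall a : G, op a e = a)
  (H K : lmodType R[i]) (ipH : H -> H -> R[i]) (ipK : K -> K -> R[i])
  (hH : is_hilbert ipH) (hK : is_hilbert ipK)
  (T : G -> {linear H -> H}) (S : G -> {linear K -> K})
  (hT : is_representation ipH op e T) (hS : is_representation ipK op e S)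
  (A : {linear K -> H}) (B : {linear H -> K})
  (hA : bounded ipK ipH A) (hB : bounded ipH ipK B)
  (hTS : forall (g : G) (x : H), T g x = A (S g (B x))) :
  exists (K1 K2 : K -> Prop) (P : K -> K)
         (sA : {linear K -> H}) (sAinv : {linear H -> K}),
    [/\ [/\ is_closed_subspace ipK K1, is_closed_subspace ipK K2,
           (forall x : K, K1 x -> K2 x),
           is_invariant S K1 & is_invariant S K2],
        is_orth_proj ipK (ominus ipK K2 K1) P,
        (* sA restricted to K2 ⊖ K1 is a bounded isomorphism onto H
           with bounded inverse sAinv *)
        [/\ bounded_on ipK ipH (ominus ipK K2 K1) sA,
            bounded ipH ipK sAinv,
            forall h : H, ominus ipK K2 K1 (sAinv h),
            forall h : H, sA (sAinv h) = h
          & forall x : K, ominus ipK K2 K1 x -> sAinv (sA x) = x],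
        opnorm_on ipK ipH (ominus ipK K2 K1) sA * opnorm ipH ipK sAinv
          <= opnorm ipK ipH A * opnorm ipH ipK B
      & forall (g : G) (h : H), T g h = sA (P (S g (sAinv h)))].
Proof.
case: hH => ipH_inner _; case: hK => ipK_inner complete.
case: hT => bdT Tmul Te; case: hS => bdS Smul Se.
set K1 := orbit_kernel S A; set K2 := intertwining_space T S A.
have closedK1 : is_closed_subspace ipK K1 := orbit_kernel_closed ipH_inner hA bdS.
have closedK2 : is_closed_subspace ipK K2 := intertwining_closed ipH_inner hA bdT bdS.
have K1K2 : forall x, K1 x -> K2 x := orbit_kernel_sub T Se.
have [P1 projP1] := exists_orth_proj ipK_inner complete closedK1.
have [P2 projP2] := exists_orth_proj ipK_inner complete closedK2.
have projP := orth_proj_ominus ipK_inner closedK2.1 K1K2 projP1 projP2.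
have P_sub := orth_proj_ominus_sub ipK_inner closedK2.1 projP1 projP2.
exists K1, K2, (P2 \- P1), A, ((P2 \- P1) \o B); split => //.
- split=> //; [exact: orbit_kernel_invariant | exact: intertwining_invariant].
- split.
  + exact: bounded_on_sub hA.
  + exact: bounded_comp hB (orth_proj_bounded ipK_inner projP).
  + by move=> h; apply: projP.1.
  + exact: orth_proj_B_cancel Te Se hTS _ P_sub.
  + move=> x Mx; exact (orth_proj_BA_id Te Se hTS ipK_inner closedK2.1 projP Mx).
- apply: ler_pM (opnorm_on_ge0 _ _ _ _) (opnorm_on_ge0 _ _ _ _) _ _.
    exact: le_opnorm_on.
  by apply: le_opnorm_on => // h _; exact (hnorm_orth_proj_le ipK_inner projP (B h)).
- exact (compression_similar Tmul Te Smul Se hTS projP P_sub).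
Qed.
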